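(* Let $T>0$, $C_1>0$, and let $H:(0,1)^n\times\mathbb S(n)\to\mathbb R^n$, $B:(0,1)^n\times\mathbb S(n)\to\mathbb S(n)$ be $C^1$ with $(B(\mu,p),p)\ge(H(\mu,p),\mu)-C_1$ and $H_i(\mu,p)\ge-C_1$ for all $(\mu,p)$ and $i$, and let $g:[0,1]^n\to\mathbb R^n$ satisfy $|g_i|\le C_1$ on $[0,1]^n$. Let $\epsilon>0$, $\mu\in\mathcal P_\epsilon(\mathbb G)$, $t\in[0,T)$, $\lambda\in[0,1]$. Then every classical solution $(\phi,\rho):[t,T]\to\mathbb R^n\times(0,1)^n$ of $$\dot\phi=H(\rho,\lambda\nabla_{\mathbb G}\phi)-\Delta_{\mathbb G}\phi,\quad \dot\rho=\nabla_{\mathbb G}\cdot B(\rho,\lambda\nabla_{\mathbb G}\phi)+\Delta_{\mathbb G}\rho\ \text{ on }(t,T),\quad \phi(T)=g(\rho(T)),\ \rho(t)=\mu,$$ satisfies $$\epsilon\,\Big\|\max_{1\le i\le n}|\lambda\phi_i|\Big\|_{L^\infty(t,T)}\le(5(T-t)+4)C_1.$$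
   Context: $\mathbb G$ is a finite connected simple undirected graph on $\{1,\dots,n\}$ with symmetric edge weights $\omega_{ij}>0$ iff $(i,j)$ is an edge. $\mathbb S(n)$: skew-symmetric matrices with $(m,\tilde m)=\frac12\sum_{(i,j)\in\mathbb E}m^{ij}\tilde m^{ij}$; Euclidean inner product on $\mathbb R^n$. $(\nabla_{\mathbb G}u)^{ij}=\sqrt{\omega_{ij}}(u^i-u^j)$, $(\nabla_{\mathbb G}\cdot m)^i=\sum_{j\ne i}\sqrt{\omega_{ij}}m^{ji}$, $(\Delta_{\mathbb G}u)^i=\sum_j\omega_{ij}(u^j-u^i)$. $\mathcal P_\epsilon(\mathbb G)$: probability vectors with all entries $>\epsilon$. Classical solution: a $C^1$ pair satisfying the system pointwise. *)

From HB Require Import structures.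
From mathcomp Require Import all_boot all_order all_algebra.
From mathcomp Require Import all_classical all_reals all_analysis.
Set Implicit Arguments. Unset Strict Implicit. Unset Printing Implicit Defensive.
Import Order.TTheory GRing.Theory Num.Theory.
Import numFieldNormedType.Exports.
Local Open Scope classical_set_scope.
Local Open Scope ring_scope.

Section GraphDefs.
Variables (R : realType) (n : nat).

(* Weighted graph on 'I_n given by its weights: (i,j) is an edge iff 0 < w i j.
   Finite connected simple undirected graph: symmetric, nonnegative weights,
   no loops (w i i = 0), connected. *)
Definition weighted_graph (w : 'I_n -> 'I_n -> R) : Prop :=
  [/\ (forall i j, w i j = w j i),
      (forall i j, 0 <= w i j),
      (forall i, w i i = 0) &
      (forall i j, connect [rel a b | 0 < w a b] i j)].

Definition skew_sym (m : 'M[R]_n) : Prop := forall i j, m i j = - m j i.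

Definition vc (u : 'rV[R]_n) (i : 'I_n) : R := u ord0 i.

Definition vdot (u v : 'rV[R]_n) : R := \sum_i vc u i * vc v i.

Definition sdot (w : 'I_n -> 'I_n -> R) (m m' : 'M[R]_n) : R :=
  2^-1 * \sum_(i < n) \sum_(j < n | 0 < w i j) m i j * m' i j.

Definition ggrad (w : 'I_n -> 'I_n -> R) (u : 'rV[R]_n) : 'M[R]_n :=
  \matrix_(i, j) (Num.sqrt (w i j) * (vc u i - vc u j)).
Definition gdiv (w : 'I_n -> 'I_n -> R) (m : 'M[R]_n) : 'rV[R]_n :=
  \row_i (\sum_(j < n | j != i) Num.sqrt (w i j) * m j i).
Definition glap (w : 'I_n -> 'I_n -> R) (u : 'rV[R]_n) : 'rV[R]_n :=
  \row_i (\sum_(j < n) w i j * (vc u j - vc u i)).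

Definition Peps (eps : R) (mu : 'rV[R]_n) : Prop :=
  \sum_i vc mu i = 1 /\ forall i, eps < vc mu i.

Definition dom01S : set ('rV[R]_n * 'M[R]_n) :=
  [set x | (forall i, 0 < vc x.1 i < 1) /\ skew_sym x.2].

Definition tangS : set ('rV[R]_n * 'M[R]_n) := [set v | skew_sym v.2].

End GraphDefs.

(* C^1 on D, D relatively open in an affine translate of the subspace S:
   directional derivatives exist in every direction of S at every point of D
   and depend continuously (within D) on the point. *)
Definition C1_on (R : realType) (V W : normedModType R) (S D : set V)
  (f : V -> W) : Prop :=
  (forall x v, D x -> S v -> derivable f x v) /\
  (forall v, S v -> {within D, continuous (fun x => 'D_v f x)}).

Definition C1_interval (R : realType) (V : normedModType R) (a b : R)
  (f : R -> V) : Prop :=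
  {within `[a, b], continuous f} /\
  (forall s, a < s < b -> derivable f s 1) /\
  exists g : R -> V, {within `[a, b], continuous g} /\
    (forall s, a < s < b -> derive1 f s = g s).

From HB Require Import structures.
From mathcomp Require Import all_boot all_order all_algebra.
From mathcomp Require Import all_classical all_reals all_analysis.
From mathcomp Require Import ring lra.
Set Implicit Arguments.
Unset Strict Implicit.
Unset Printing Implicit Defensive.
Import Order.TTheory GRing.Theory Num.Theory.
Import numFieldNormedType.Exports.
Local Open Scope classical_set_scope.
Local Open Scope ring_scope.

(* A maximum principle (at a maximal coordinate
   the graph Laplacian is nonpositive, and [H >= -C1]) bounds [phi] above by
   [C1 + C1 (T - t)].  Since [sum (div m) = sum (Lap u) = 0], [rho] stays a
   probability vector; by the adjunction [(u, div m) = - (m, grad u)] and the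
   symmetry of the Laplacian, the derivative of [lambda (phi, rho)] is
   [- (B, lambda grad phi) + lambda (H, rho) <= 2 C1], while [sum_i phi_i]
   decreases at rate at most [n C1].  Integrating over [[t, s]] and [[t, T]],
   and using [rho(t) = mu >= eps] componentwise, bounds [eps lambda phi_i(s)]
   from below; the maximum principle bounds it from above. *)

Section RealCalculus.
Variable R : realType.
Implicit Types (a b c x y : R) (f df : R -> R).

Lemma continuous_within_sum n (A : set R) (f : 'I_n -> R -> R) :
  (forall j, {within A, continuous (f j)}) ->
  {within A, continuous (fun r => \sum_j f j r)}.
Proof.
move=> cf; rewrite -fct_sumE; elim/big_ind: _ => //.
- by move=> x; exact: cst_continuous.
- by move=> g h cg ch x; apply: continuousD; [exact: cg | exact: ch].
Qed.

Lemma continuous_withinM (A : set R) f (g : R -> R) :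
  {within A, continuous f} -> {within A, continuous g} ->
  {within A, continuous (fun r => f r * g r)}.
Proof. by move=> cf cg x; apply: continuousM; [exact: cf | exact: cg]. Qed.

Lemma ltW_oo_cc a b x : a < x < b -> a <= x <= b.
Proof. by case/andP=> ax xb; rewrite !ltW. Qed.

Lemma MVT_within f df a b x y : {within `[a, b], continuous f} ->
  (forall z, a < z < b -> is_derive z 1 f (df z)) ->
  a <= x -> x < y -> y <= b ->
  exists2 z, a < z < b & f y - f x = df z * (y - x).
Proof.
move=> cf hd ax xy yb.
have hd' : forall z, z \in `]x, y[ -> is_derive z 1 f (df z).
  move=> z /[!in_itv] /= /andP[xz zy]; apply: hd.
  by rewrite (le_lt_trans ax xz) (lt_le_trans zy yb).
have cf' : {within `[x, y], continuous f}.
  by apply: continuous_subspaceW cf; exact: subset_itv.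
have [z /[!in_itv] /= /andP[xz zy] ->] := MVT xy hd' cf'.
by exists z; rewrite ?(le_lt_trans ax xz) ?(lt_le_trans zy yb).
Qed.

Lemma increment_le_of_derive f df a b c : {within `[a, b], continuous f} ->
  (forall z, a < z < b -> is_derive z 1 f (df z)) ->
  (forall z, a < z < b -> df z <= c) ->
  forall x y, a <= x -> x <= y -> y <= b -> f y - f x <= c * (y - x).
Proof.
move=> cf hd hc x y ax; rewrite le_eqVlt => /predU1P[-> _|xy yb].
  by rewrite !subrr mulr0.
have [z hz ->] := MVT_within cf hd ax xy yb.
by rewrite ler_wpM2r ?subr_ge0 ?(ltW xy) ?hc.
Qed.

Lemma increment_ge_of_derive f df a b c : {within `[a, b], continuous f} ->
  (forall z, a < z < b -> is_derive z 1 f (df z)) ->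
  (forall z, a < z < b -> c <= df z) ->
  forall x y, a <= x -> x <= y -> y <= b -> c * (y - x) <= f y - f x.
Proof.
move=> cf hd hc x y ax; rewrite le_eqVlt => /predU1P[-> _|xy yb].
  by rewrite !subrr mulr0.
have [z hz ->] := MVT_within cf hd ax xy yb.
by rewrite ler_wpM2r ?subr_ge0 ?(ltW xy) ?hc.
Qed.

Lemma derive_le_right_slope f a c b : c < b -> derivable f c 1 ->
  (forall x, c < x < b -> f x - f c <= a * (x - c)) -> 'D_1 f c <= a.
Proof.
move=> cb df hf.
rewrite ['D_1 f c]cvg_at_rightE; last exact: df.
apply: limr_le.
  rewrite -(cvg_at_rightE (fun h : R => h^-1 *: ((f \o shift c) _ - f c))) //.
  apply: cvg_trans df; apply: cvg_app.
  move=> A [e egt0 Ae]; exists e => // x xe xgt0; apply: Ae => //.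
  exact/lt0r_neq0.
near=> h.
have h0 : 0 < h by near: h; exists 1 => /=.
have hb : h < b - c.
  near: h; exists (b - c); first by rewrite /= subr_gt0.
  move=> y; rewrite /= distrC subr0 => /(le_lt_trans (ler_norm _)) //.
rewrite /= [_%:A]mulr1.
have := hf (h + c); rewrite ltrDr h0 -ltrBrDr hb addrK => /(_ isT) hle.
by rewrite -(ler_pM2l h0) mulrA mulfV ?gt_eqF // mul1r mulrC.
Unshelve. all: by end_near. Qed.

Lemma le_at_left_endpoint f a b c : a < b ->
  {within `[a, b], continuous f} -> (forall x, a < x < b -> f x <= c) -> f a <= c.
Proof.
move=> ab /(continuous_within_itvP _ ab) [_ fa _] hf.
apply: (cvgr_to_le fa).
near=> x; apply: hf; apply/andP; split.
  by near: x; exact: nbhs_right_gt.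
by near: x; exact: nbhs_right_lt.
Unshelve. all: by end_near. Qed.

Lemma exists_joint_max n (v : 'I_n -> R -> R) a b (i0 : 'I_n) : a <= b ->
  (forall j, {within `[a, b], continuous (v j)}) ->
  exists k, exists2 c, c \in `[a, b] &
    forall j x, x \in `[a, b] -> v j x <= v k c.
Proof.
move=> ab cv.
have /choice[c hc] : forall j, exists c, c \in `[a, b] /\
    forall x, x \in `[a, b] -> v j x <= v j c.
  by move=> j; have [c ? ?] := EVT_max ab (cv j); exists c.
case: (@arg_maxP _ _ 'I_n i0 xpredT (fun j => v j (c j)) isT) => k _ kmax.
exists k, (c k); first exact: (hc k).1.
by move=> j x xab; apply: le_trans ((hc j).2 x xab) (kmax j isT).
Qed.

End RealCalculus.

Section RowCurves.
Variables (R : realType) (n : nat).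
Implicit Types (u v : R -> 'rV[R]_n) (A : set R).

Lemma continuous_within_coord u A i :
  {within A, continuous u} -> {within A, continuous (fun r => vc (u r) i)}.
Proof.
by move=> cu x; exact: (continuous_comp (cu x) (@coord_continuous R 1 n ord0 i (u x))).
Qed.

Lemma is_derive_coord u s i :
  derivable u s 1 -> is_derive s 1 (fun r => vc (u r) i) (vc (derive1 u s) i).
Proof.
move=> du.
have cvg_u : (fun h : R => h^-1 *: ((u \o shift s) (h *: 1) - u s)) @ 0^' --> 'D_1 u s.
  exact: du.
have cvg_i := cvg_comp _ _ cvg_u (@coord_continuous R 1 n ord0 i ('D_1 u s)).
have quotient_i : (fun M : 'rV[R]_n => M ord0 i) \o
      (fun h : R => h^-1 *: ((u \o shift s) (h *: 1) - u s))
    = (fun h : R => h^-1 *: (((fun r => vc (u r) i) \o shift s) (h *: 1) - vc (u s) i)).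
  by apply: funext => h /=; rewrite /vc !mxE.
rewrite quotient_i in cvg_i.
apply: DeriveDef; first by apply/cvg_ex; eexists; exact: cvg_i.
by rewrite derive1E; exact: cvg_lim cvg_i.
Qed.

Lemma continuous_within_vdot u v A :
  {within A, continuous u} -> {within A, continuous v} ->
  {within A, continuous (fun r => vdot (u r) (v r))}.
Proof.
move=> cu cv; apply: continuous_within_sum => j.
by apply: continuous_withinM; exact: continuous_within_coord.
Qed.

Lemma continuous_within_sum_coord u A :
  {within A, continuous u} -> {within A, continuous (fun r => \sum_j vc (u r) j)}.
Proof. by move=> cu; apply: continuous_within_sum => j; exact: continuous_within_coord. Qed.

Lemma is_derive_vdot u v s : derivable u s 1 -> derivable v s 1 ->
  is_derive s 1 (fun r => vdot (u r) (v r))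
    (vdot (u s) (derive1 v s) + vdot (derive1 u s) (v s)).
Proof.
move=> du dv; rewrite /vdot -big_split /= -fct_sumE; apply: is_derive_sum => j.
rewrite [vc (derive1 u s) j * _]mulrC.
by have := is_deriveM (is_derive_coord j du) (is_derive_coord j dv).
Qed.

Lemma is_derive_sum_coord u s : derivable u s 1 ->
  is_derive s 1 (fun r => \sum_j vc (u r) j) (\sum_j vc (derive1 u s) j).
Proof.
by move=> du; rewrite -fct_sumE; apply: is_derive_sum => j; exact: is_derive_coord.
Qed.

End RowCurves.

Section InnerProducts.
Variables (R : realType) (n : nat).
Implicit Types (a c eps U : R) (u v p : 'rV[R]_n) (m : 'M[R]_n).

Lemma vcD u v j : vc (u + v) j = vc u j + vc v j.
Proof. by rewrite /vc mxE. Qed.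

Lemma vcB u v j : vc (u - v) j = vc u j - vc v j.
Proof. by rewrite /vc !mxE. Qed.

Lemma vdotC u v : vdot u v = vdot v u.
Proof. by apply: eq_bigr => j _; rewrite mulrC. Qed.

Lemma vdotDr u v v' : vdot u (v + v') = vdot u v + vdot u v'.
Proof. by rewrite /vdot -big_split; apply: eq_bigr => j _; rewrite /vc mxE mulrDr. Qed.

Lemma vdotBl u u' v : vdot (u - u') v = vdot u v - vdot u' v.
Proof. by rewrite /vdot -sumrB; apply: eq_bigr => j _; rewrite /vc !mxE mulrBl. Qed.

Lemma skew_symZ a m : skew_sym m -> skew_sym (a *: m).
Proof. by move=> sk i j; rewrite !mxE sk mulrN. Qed.

Lemma sdotZr w a m m' : sdot w m (a *: m') = a * sdot w m m'.
Proof.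
rewrite /sdot mulrCA; congr (_ * _); rewrite mulr_sumr; apply: eq_bigr => i _.
by rewrite mulr_sumr; apply: eq_bigr => j _; rewrite mxE mulrCA.
Qed.

Lemma vdot_prob_ge c u p : (forall j, c <= vc u j) -> (forall j, 0 <= vc p j) ->
  \sum_j vc p j = 1 -> c <= vdot u p.
Proof.
move=> cu p0 p1; rewrite -[c]mulr1 -p1 mulr_sumr.
by apply: ler_sum => j _; apply: ler_wpM2r.
Qed.

Lemma vdot_prob_le eps U u p : \sum_j vc p j = 1 -> (forall j, eps <= vc p j) ->
  (forall j, vc u j <= U) ->
  vdot u p <= eps * \sum_j vc u j + (1 - n%:R * eps) * U.
Proof.
move=> p1 peps uU.
have -> : eps * \sum_j vc u j + (1 - n%:R * eps) * U
    = \sum_j (eps * vc u j + (vc p j - eps) * U).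
  rewrite big_split /= -mulr_sumr -mulr_suml sumrB p1 sumr_const card_ord.
  by rewrite mulr_natl.
rewrite /vdot; apply: ler_sum => j _.
have : 0 <= (vc p j - eps) * (U - vc u j) by rewrite mulr_ge0 ?subr_ge0.
nra.
Qed.

Lemma sum_le_coord u U i : (forall j, vc u j <= U) ->
  \sum_j vc u j <= vc u i + (n%:R - 1) * U.
Proof.
move=> uU; rewrite (bigD1 i) //= lerD2l.
have -> : (n%:R - 1) * U = \sum_(j < n | j != i) U.
  rewrite sumr_const cardC1 card_ord -[in RHS]mulr_natl -subn1 natrB //.
  exact: leq_ltn_trans (leq0n i) (ltn_ord i).
by apply: ler_sum => j _.
Qed.

Lemma card_mul_lbound_le1 eps p : \sum_j vc p j = 1 -> (forall j, eps <= vc p j) ->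
  n%:R * eps <= 1.
Proof.
move=> p1 peps.
have -> : n%:R * eps = \sum_(j < n) eps by rewrite sumr_const card_ord mulr_natl.
by rewrite -p1; apply: ler_sum => j _.
Qed.

End InnerProducts.

Section GraphOperators.
Variables (R : realType) (n : nat) (w : 'I_n -> 'I_n -> R).
Implicit Types (u v : 'rV[R]_n) (m : 'M[R]_n).

Lemma vc_glap u i : vc (glap w u) i = \sum_j w i j * (vc u j - vc u i).
Proof. by rewrite /vc mxE. Qed.

Lemma glap_le0_at_max u i : (forall j k, 0 <= w j k) ->
  (forall j, vc u j <= vc u i) -> vc (glap w u) i <= 0.
Proof.
move=> wge0 umax; rewrite vc_glap; apply: sumr_le0 => j _.
by rewrite mulr_ge0_le0 // subr_le0.
Qed.

Lemma gdiv_skewE m i : skew_sym m ->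
  vc (gdiv w m) i = \sum_j Num.sqrt (w i j) * m j i.
Proof.
move=> sk; rewrite /vc mxE [RHS](bigD1 i) //=.
have /eqP mii0 : m i i == 0 by rewrite -[_ == 0](@mulrn_eq0 _ _ 2) mulr2n {2}sk subrr.
by rewrite mii0 mulr0 add0r.
Qed.

Hypothesis wsym : forall i j, w i j = w j i.

Lemma sum_glap u : \sum_i vc (glap w u) i = 0.
Proof.
apply/eqP; rewrite -[_ == 0](@mulrn_eq0 _ _ 2) mulr2n.
rewrite [X in X + _](eq_bigr _ (fun i _ => vc_glap u i)) exchange_big /=.
rewrite -big_split big1 // => i _; rewrite vc_glap -big_split big1 // => j _.
by rewrite (wsym j i) /=; ring.
Qed.

Lemma vdot_glapC u v : vdot u (glap w v) = vdot v (glap w u).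
Proof.
have expand u' v' : vdot u' (glap w v') = \sum_i \sum_j w i j * vc u' i * vc v' j
    - \sum_i vc u' i * vc v' i * \sum_j w i j.
  rewrite /vdot -sumrB; apply: eq_bigr => i _; rewrite vc_glap !mulr_sumr -sumrB.
  by apply: eq_bigr => j _; ring.
rewrite !expand exchange_big; congr (_ - _).
  by apply: eq_bigr => i _; apply: eq_bigr => j _; rewrite wsym; ring.
by apply: eq_bigr => i _; rewrite [vc v i * _]mulrC.
Qed.

Lemma skew_ggrad u : skew_sym (ggrad w u).
Proof. by move=> i j; rewrite !mxE wsym; ring. Qed.

Lemma sum_gdiv m : skew_sym m -> \sum_i vc (gdiv w m) i = 0.
Proof.
move=> sk; apply/eqP; rewrite -[_ == 0](@mulrn_eq0 _ _ 2) mulr2n.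
rewrite [X in X + _](eq_bigr _ (fun i _ => gdiv_skewE i sk)) exchange_big /=.
rewrite -big_split big1 // => i _; rewrite gdiv_skewE // -big_split big1 // => j _.
by rewrite /= (wsym j i) (sk j i); ring.
Qed.

Lemma vdot_gdiv m u : (forall i j, 0 <= w i j) -> skew_sym m ->
  vdot u (gdiv w m) = - sdot w m (ggrad w u).
Proof.
move=> wge0 sk.
pose Q := \sum_i \sum_j m i j * Num.sqrt (w i j) * vc u i.
have -> : vdot u (gdiv w m) = - Q.
  rewrite /Q -sumrN; apply: eq_bigr => i _.
  rewrite gdiv_skewE // mulr_sumr -sumrN; apply: eq_bigr => j _.
  by rewrite (sk j i); ring.
congr (- _); rewrite /sdot.
have unfilter i : \sum_(j < n | 0 < w i j) m i j * ggrad w u i j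
    = \sum_j m i j * Num.sqrt (w i j) * (vc u i - vc u j).
  rewrite big_mkcond /=; apply: eq_bigr => j _; rewrite /ggrad mxE.
  case: ifP => [_|]; first by rewrite mulrA.
  by rewrite lt_def (wge0 i j) andbT => /negbFE/eqP ->; rewrite sqrtr0 !(mulr0, mul0r).
rewrite (eq_bigr _ (fun i _ => unfilter i)).
have swap : \sum_i \sum_j m i j * Num.sqrt (w i j) * vc u j = - Q.
  rewrite exchange_big /Q -sumrN; apply: eq_bigr => i _; rewrite -sumrN.
  by apply: eq_bigr => j _; rewrite (sk j i) (wsym j i); ring.
have split_diff : \sum_i \sum_j m i j * Num.sqrt (w i j) * (vc u i - vc u j)
    = Q - \sum_i \sum_j m i j * Num.sqrt (w i j) * vc u j.
  rewrite /Q -sumrB; apply: eq_bigr => i _; rewrite -sumrB.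
  by apply: eq_bigr => j _; ring.
rewrite split_diff swap opprK; lra.
Qed.

End GraphOperators.

Section MaximumPrinciple.
Variables (R : realType) (n : nat) (w : 'I_n -> 'I_n -> R).
Hypothesis wge0 : forall i j, 0 <= w i j.
Variables (t T C M : R) (phi h : R -> 'rV[R]_n).
Hypotheses (cphi : {within `[t, T], continuous phi})
  (dphi : forall s, t < s < T -> derivable phi s 1)
  (ephi : forall s, t < s < T -> derive1 phi s = h s - glap w (phi s))
  (hge : forall s i, t < s < T -> - C <= vc (h s) i)
  (phiT : forall i, vc (phi T) i <= M).

(* For [k > C] the maximum of [phi_j x + k x] over [j] and [x \in [s, T]] is
   attained at [x = T]: at a maximum with [x < T] the right derivative of the
   maximal coordinate would be [<= -k], while [h >= -C] and the Laplacian of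
   [phi] is [<= 0] there. *)
Lemma max_principle_perturbed d s i : 0 < d -> t < s < T ->
  vc (phi s) i + (C + d) * s <= M + (C + d) * T.
Proof.
move=> d0 /andP[ts sT].
pose k := C + d; pose v j x := vc (phi x) j + k * x.
have cv j : {within `[s, T], continuous (v j)}.
  have cphi_sT : {within `[s, T], continuous phi}.
    by apply: continuous_subspaceW cphi; apply: subset_itv; rewrite bnd_simp ?(ltW ts).
  move=> x; apply: continuousD; first exact: continuous_within_coord cphi_sT x.
  exact: (continuous_subspaceT (@mulrl_continuous R k)) x.
have [k0 [c cin cmax]] := exists_joint_max i (ltW sT) cv.
have /andP[sc cT] : s <= c <= T by rewrite in_itv in cin.
apply: le_trans (cmax i s _) _; first by rewrite in_itv /= lexx ltW.
have [->|cneT] := eqVneq c T; first by rewrite /v lerD2r.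
have {}cT : c < T by rewrite lt_neqAle cneT.
have hc : t < c < T by rewrite cT (lt_le_trans ts sc).
have [dphi_c Dphi_c] := is_derive_coord k0 (dphi hc).
have slope : 'D_1 (fun x => vc (phi x) k0) c <= - k.
  apply: derive_le_right_slope cT dphi_c _ => x /andP[cx xT].
  have := cmax k0 x; rewrite in_itv /= (le_trans sc (ltW cx)) (ltW xT) /v.
  by move=> /(_ isT); lra.
have lap : vc (glap w (phi c)) k0 <= 0.
  by apply: glap_le0_at_max => // j; have := cmax j c cin; rewrite /v; lra.
move: slope; rewrite Dphi_c ephi // vcB.
by have := hge k0 hc; rewrite /k; lra.
Qed.

Lemma max_principle s i : t < s < T -> vc (phi s) i <= M + C * (T - s).
Proof.
move=> hs; have sT : 0 < T - s by rewrite subr_gt0; case/andP: hs.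
apply/ler_addgt0Pr => e e0.
pose d := e / (T - s).
have ed : e = d * (T - s) by rewrite divfK ?lt0r_neq0.
by have := max_principle_perturbed i (divr_gt0 e0 sT) hs; rewrite -/d ed; lra.
Qed.

Lemma max_principle_itv s i : 0 <= C -> t < T -> t <= s <= T ->
  vc (phi s) i <= M + C * (T - t).
Proof.
move=> C0 tT /andP[ts sT].
have interior x : t < x < T -> vc (phi x) i <= M + C * (T - t).
  move=> hx; apply: le_trans (max_principle i hx) _.
  by case/andP: hx => tx _; nra.
have [->|sneT] := eqVneq s T; first by have := phiT i; nra.
have [<-|tneS] := eqVneq t s.
  exact: le_at_left_endpoint tT (continuous_within_coord cphi) interior.
by apply: interior; rewrite !lt_neqAle tneS sneT ts sT.
Qed.

End MaximumPrinciple.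

Section ClassicalSolution.
Variables (R : realType) (n : nat) (w : 'I_n -> 'I_n -> R).
Hypotheses (wsym : forall i j, w i j = w j i) (wge0 : forall i j, 0 <= w i j).
Variables (C1 t T lambda : R) (H : 'rV[R]_n * 'M[R]_n -> 'rV[R]_n)
  (B : 'rV[R]_n * 'M[R]_n -> 'M[R]_n) (phi rho : R -> 'rV[R]_n).
Hypotheses (C1_gt0 : 0 < C1) (tT : t < T) (lambda01 : 0 <= lambda <= 1).
Hypotheses (Bskew : forall x, dom01S x -> skew_sym (B x))
  (HB_dual : forall x, dom01S x -> vdot (H x) x.1 - C1 <= sdot w (B x) x.2)
  (H_ge : forall x i, dom01S x -> - C1 <= vc (H x) i).
Hypotheses (cphi : {within `[t, T], continuous phi})
  (crho : {within `[t, T], continuous rho})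
  (dphi : forall s, t < s < T -> derivable phi s 1)
  (drho : forall s, t < s < T -> derivable rho s 1)
  (rho01 : forall s, t <= s <= T -> forall i, 0 < vc (rho s) i < 1).
Let X s := (rho s, lambda *: ggrad w (phi s)).
Hypotheses
  (ephi : forall s, t < s < T -> derive1 phi s = H (X s) - glap w (phi s))
  (erho : forall s, t < s < T -> derive1 rho s = gdiv w (B (X s)) + glap w (rho s))
  (mass_t : \sum_j vc (rho t) j = 1)
  (phiT : forall j, `|vc (phi T) j| <= C1).

Lemma X_in_dom s : t < s < T -> dom01S (X s).
Proof.
move=> hs; split => [i|]; first exact: rho01 (ltW_oo_cc hs) i.
exact/skew_symZ/skew_ggrad.
Qed.

Lemma rho_ge0 s j : t <= s <= T -> 0 <= vc (rho s) j.
Proof. by move=> hs; have /andP[/ltW] := rho01 hs j. Qed.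

Lemma mass_conservation s : t <= s <= T -> \sum_j vc (rho s) j = 1.
Proof.
move=> /andP[ts sT].
have dmass r : t < r < T -> is_derive r 1 (fun x => \sum_j vc (rho x) j) 0.
  move=> hr; have := is_derive_sum_coord (drho hr).
  rewrite erho // (eq_bigr _ (fun j _ => vcD _ _ j)) big_split /=.
  by rewrite sum_gdiv ?sum_glap ?addr0 //; apply/Bskew/X_in_dom.
have cmass := continuous_within_sum_coord crho.
have le := increment_le_of_derive cmass dmass (fun _ _ => lexx 0) (lexx t) ts sT.
have ge := increment_ge_of_derive cmass dmass (fun _ _ => lexx 0) (lexx t) ts sT.
by move: le ge; rewrite mass_t mul0r; lra.
Qed.

Lemma phi_le s j : t <= s <= T -> vc (phi s) j <= C1 + C1 * (T - t).
Proof.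
apply: (max_principle_itv wge0 cphi dphi ephi) => //.
- by move=> r i hr; exact/H_ge/X_in_dom.
- by move=> i; have := phiT i; rewrite ler_norml => /andP[].
- exact: ltW.
Qed.

Lemma pairing_derive_le s : t < s < T ->
  lambda * (vdot (phi s) (derive1 rho s) + vdot (derive1 phi s) (rho s)) <= 2 * C1.
Proof.
move=> hs; have dom_s := X_in_dom hs.
rewrite erho // ephi // vdotDr vdotBl [vdot (glap w _) _]vdotC vdot_glapC //.
pose p := lambda *: ggrad w (phi s).
have div_term : lambda * vdot (phi s) (gdiv w (B (X s))) = - sdot w (B (X s)) p.
  by rewrite (vdot_gdiv wsym _ wge0 (Bskew dom_s)) /p sdotZr mulrN.
have dual : vdot (H (X s)) (rho s) - C1 <= sdot w (B (X s)) p := HB_dual dom_s.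
have Hrho : - C1 <= vdot (H (X s)) (rho s).
  apply: vdot_prob_ge => [i|i|]; first exact: H_ge.
    by apply: rho_ge0; exact: ltW_oo_cc.
  exact: mass_conservation (ltW_oo_cc hs).
case/andP: lambda01 => l0 l1.
have : 0 <= (1 - lambda) * (vdot (H (X s)) (rho s) + C1).
  by rewrite mulr_ge0 // ?subr_ge0 // -lerBlDr sub0r.
have : 0 <= lambda * C1 by rewrite mulr_ge0 // ltW.
lra.
Qed.

Lemma pairing_increment :
  lambda * vdot (phi T) (rho T) - lambda * vdot (phi t) (rho t) <= 2 * C1 * (T - t).
Proof.
pose F r := lambda * vdot (phi r) (rho r).
have cF : {within `[t, T], continuous F}.
  apply: continuous_withinM; first by move=> x; exact: cst_continuous.
  exact: continuous_within_vdot.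
have dF r : t < r < T -> is_derive r 1 F
    (lambda * (vdot (phi r) (derive1 rho r) + vdot (derive1 phi r) (rho r))).
  by move=> hr; have := is_deriveZ lambda (is_derive_vdot (dphi hr) (drho hr)).
by have := increment_le_of_derive cF dF pairing_derive_le (lexx t) (ltW tT) (lexx T).
Qed.

Lemma sum_phi_increment s : t <= s <= T ->
  \sum_j vc (phi t) j <= \sum_j vc (phi s) j + n%:R * C1 * (s - t).
Proof.
move=> /andP[ts sT].
have dP r : t < r < T -> is_derive r 1 (fun x => \sum_j vc (phi x) j)
    (\sum_j vc (H (X r)) j).
  move=> hr; have := is_derive_sum_coord (dphi hr).
  by rewrite ephi // (eq_bigr _ (fun j _ => vcB _ _ j)) sumrB sum_glap // subr0.
have dP_ge r : t < r < T -> - (n%:R * C1) <= \sum_j vc (H (X r)) j.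
  have -> : - (n%:R * C1) = \sum_(j < n) - C1.
    by rewrite sumr_const card_ord mulr_natl mulNrn.
  by move=> hr; apply: ler_sum => j _; exact/H_ge/X_in_dom.
have := increment_ge_of_derive (continuous_within_sum_coord cphi) dP dP_ge
  (lexx t) ts sT.
lra.
Qed.

Section Estimates.
Variables (eps s : R) (i : 'I_n).
Hypotheses (eps_gt0 : 0 < eps) (eps_le : forall j, eps <= vc (rho t) j)
  (hs : t < s < T).

Lemma eps_lambda_phi_ge :
  - (2 * C1 + 4 * C1 * (T - t)) <= eps * (lambda * vc (phi s) i).
Proof.
have C1_ge0 := ltW C1_gt0; have /andP[ts sT] := hs; have [l0 l1] := andP lambda01.
have CT0 : 0 <= C1 * (T - t) by rewrite mulr_ge0 // subr_ge0 ltW.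
have phi_t_le j : vc (phi t) j <= C1 + C1 * (T - t).
  by apply: phi_le; rewrite lexx (ltW tT).
have pairing_T : - C1 <= vdot (phi T) (rho T).
  apply: vdot_prob_ge => [j|j|]; first by have := phiT j; rewrite ler_norml => /andP[].
    by apply: rho_ge0; rewrite lexx (ltW tT).
  by apply: mass_conservation; rewrite lexx (ltW tT).
have pairing_t := vdot_prob_le mass_t eps_le phi_t_le.
have sum_s := sum_le_coord i (fun j => phi_le j (ltW_oo_cc hs)).
have sum_t := sum_phi_increment (ltW_oo_cc hs).
have eps_n := card_mul_lbound_le1 mass_t eps_le.
have incr := pairing_increment.
have pairing_T_scaled : - C1 <= lambda * vdot (phi T) (rho T).
  have : 0 <= lambda * (vdot (phi T) (rho T) + C1).
    by rewrite mulr_ge0 // -lerBlDr sub0r.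
  have : 0 <= (1 - lambda) * C1 by rewrite mulr_ge0 // subr_ge0.
  lra.
have pairing_t_scaled := ler_wpM2l l0 pairing_t.
have sum_phi_t_le : \sum_j vc (phi t) j
    <= vc (phi s) i + (n%:R - 1) * (C1 + C1 * (T - t)) + n%:R * C1 * (s - t).
  by lra.
have sum_phi_t_scaled := ler_wpM2l (mulr_ge0 l0 (ltW eps_gt0)) sum_phi_t_le.
have weight_ge0 : 0 <= (1 - lambda + lambda * eps) * (C1 + C1 * (T - t)).
  by apply: mulr_ge0; [have := mulr_ge0 l0 (ltW eps_gt0) | ]; lra.
have drift_le : lambda * (n%:R * eps) * (C1 * (s - t)) <= 1 * (C1 * (T - t)).
  have neps0 : 0 <= n%:R * eps by rewrite mulr_ge0 // ltW.
  apply: ler_pM; first exact: mulr_ge0.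
  - by rewrite mulr_ge0 // subr_ge0 ltW.
  - exact: le_trans (ler_piMl neps0 l1) eps_n.
  - by rewrite ler_pM2l // lerD2r ltW.
lra.
Qed.

Lemma eps_lambda_phi_le : eps * (lambda * vc (phi s) i) <= C1 + C1 * (T - t).
Proof.
have [l0 l1] := andP lambda01; have phi_s_le := phi_le i (ltW_oo_cc hs).
have n1 : 1 <= n%:R :> R by rewrite ler1n (leq_ltn_trans (leq0n i) (ltn_ord i)).
have eps1 : eps <= 1.
  have := card_mul_lbound_le1 mass_t eps_le.
  have : 0 <= (n%:R - 1) * eps by rewrite mulr_ge0 ?subr_ge0 // ltW.
  lra.
have [y0|y0] := leP 0 (vc (phi s) i).
- apply: le_trans (ler_piMl (mulr_ge0 l0 y0) eps1) _.
  exact: le_trans (ler_piMl y0 l1) phi_s_le.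
- have C1_ge0 := ltW C1_gt0.
  have CT0 : 0 <= C1 * (T - t) by rewrite mulr_ge0 // subr_ge0 ltW.
  have U0 : 0 <= C1 + C1 * (T - t) by rewrite addr_ge0.
  apply: le_trans _ U0; apply: mulr_ge0_le0; first exact: ltW.
  exact: mulr_ge0_le0 l0 (ltW y0).
Qed.

End Estimates.

Lemma lambda_phi_bound (eps s : R) i :
  0 < eps -> (forall j, eps <= vc (rho t) j) -> t < s < T ->
  eps * `|lambda * vc (phi s) i| <= (5 * (T - t) + 4) * C1.
Proof.
move=> eps_gt0 eps_le hs; have C1_ge0 := ltW C1_gt0.
have := eps_lambda_phi_ge i eps_gt0 eps_le hs.
have := eps_lambda_phi_le i eps_gt0 eps_le hs.
have : 0 <= C1 * (T - t) by rewrite mulr_ge0 // subr_ge0 ltW.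
have [ly0|ly0] := leP 0 (lambda * vc (phi s) i).
- by rewrite ger0_norm //; lra.
- by rewrite ltr0_norm // mulrN; lra.
Qed.

End ClassicalSolution.

Theorem proposition3p3 (R : realType) (n : nat) (w : 'I_n -> 'I_n -> R)
  (T C1 : R)
  (H : 'rV[R]_n * 'M[R]_n -> 'rV[R]_n)
  (B : 'rV[R]_n * 'M[R]_n -> 'M[R]_n)
  (g : 'rV[R]_n -> 'rV[R]_n)
  (eps : R) (mu : 'rV[R]_n) (t lambda : R)
  (phi rho : R -> 'rV[R]_n) :
  weighted_graph w ->
  0 < T -> 0 < C1 ->
  C1_on (@tangS R n) (@dom01S R n) H ->
  C1_on (@tangS R n) (@dom01S R n) B ->
  (forall x, dom01S x -> skew_sym (B x)) ->
  (forall x, dom01S x -> sdot w (B x) (snd x) >= vdot (H x) (fst x) - C1) ->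
  (forall x i, dom01S x -> vc (H x) i >= - C1) ->
  (forall r, (forall i, 0 <= vc r i <= 1) -> forall i, `|vc (g r) i| <= C1) ->
  0 < eps -> Peps eps mu -> 0 <= t < T -> 0 <= lambda <= 1 ->
  (* (phi, rho) is a classical solution on [t, T] *)
  C1_interval t T phi -> C1_interval t T rho ->
  (forall s, t <= s <= T -> forall i, 0 < vc (rho s) i < 1) ->
  (forall s, t < s < T ->
     derive1 phi s = H (rho s, lambda *: ggrad w (phi s)) - glap w (phi s)) ->
  (forall s, t < s < T ->
     derive1 rho s = gdiv w (B (rho s, lambda *: ggrad w (phi s))) + glap w (rho s)) ->
  phi T = g (rho T) -> rho t = mu ->
  forall s, t < s < T -> forall i,
    eps * `|lambda * vc (phi s) i| <= (5 * (T - t) + 4) * C1.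
Proof.
move=> [wsym wge0 _ _] _ C1_gt0 _ _ Bskew HB_dual H_ge g_bound eps_gt0
  [mu_mass mu_gt] /andP[_ tT] lambda01 [cphi [dphi _]] [crho [drho _]] rho01
  ephi erho phiT rho_t s hs i.
have phiT_bound j : `|vc (phi T) j| <= C1.
  have hT : t <= T <= T by rewrite lexx (ltW tT).
  rewrite phiT; apply: g_bound => k; have /andP[? ?] := rho01 T hT k.
  by rewrite !ltW.
apply: (lambda_phi_bound wsym wge0 C1_gt0 tT lambda01 Bskew HB_dual H_ge
  cphi crho dphi drho rho01 ephi erho _ phiT_bound i eps_gt0 _ hs).
- by rewrite rho_t.
- by move=> j; rewrite rho_t ltW.
Qed.
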